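(* For positive integers $n$ and $a$ with $2a\le n$, $S_{\mathcal{Q}}(K_{a,n-a})\ge S_{\mathcal{Q}}(K_{\lfloor n/2\rfloor,\lceil n/2\rceil})$, with equality if and only if $K_{a,n-a}\cong K_{\lfloor n/2\rfloor,\lceil n/2\rceil}$ (i.e. $a=\lfloor n/2\rfloor$).
   Context: For a connected graph $G$ with vertex set $\{v_1,\dots,v_n\}$: $\mathcal{D}(G)=(d_G(v_i,v_j))$ is the distance matrix, $D_i=\sum_j d_G(v_i,v_j)$, $Tr(G)=\mathrm{diag}(D_1,\dots,D_n)$, $\mathcal{Q}(G)=Tr(G)+\mathcal{D}(G)$, and $S_{\mathcal{Q}}(G)$ is the difference between the largest and the least eigenvalue of $\mathcal{Q}(G)$. $K_{a,b}$ is the complete bipartite graph with parts of sizes $a,b$. *)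

From HB Require Import structures.
From mathcomp Require Import all_boot all_order all_algebra.
From mathcomp Require Import boolp classical_sets reals.
Set Implicit Arguments. Unset Strict Implicit. Unset Printing Implicit Defensive.
Import Order.TTheory GRing.Theory Num.Theory.
Local Open Scope ring_scope.

Fixpoint reach (m : nat) (e : rel 'I_m) (k : nat) (x y : 'I_m) : bool :=
  if k is k'.+1 then [exists z, e x z && reach e k' z y] else x == y.

(* Graph distance d_G(x,y): least k with a walk (hence a path) of length k
   from x to y; for a connected graph on m vertices this is < m. *)
Definition gdist (m : nat) (e : rel 'I_m) (x y : 'I_m) : nat :=
  find (fun k => reach e k x y) (iota 0 m).

Definition distmx (R : realType) (m : nat) (e : rel 'I_m) : 'M[R]_m :=
  \matrix_(i, j) (gdist e i j)%:R.

Definition transmx (R : realType) (m : nat) (e : rel 'I_m) : 'M[R]_m :=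
  diag_mx (\row_i \sum_j distmx R e i j).

Definition distQ (R : realType) (m : nat) (e : rel 'I_m) : 'M[R]_m :=
  transmx R e + distmx R e.

Definition eigset (R : realType) (m : nat) (A : 'M[R]_m) : set R :=
  [set x | eigenvalue A x].

Definition spread (R : realType) (m : nat) (A : 'M[R]_m) : R :=
  sup (eigset A) - inf (eigset A).

Definition SQ (R : realType) (m : nat) (e : rel 'I_m) : R := spread (distQ R e).

(* Complete bipartite graph K_{a,b}: vertices 'I_(a+b), the first a form one part. *)
Definition Kbip (a b : nat) : rel 'I_(a + b) :=
  fun i j => (i < a)%N != (j < a)%N.
Arguments Kbip a b : clear implicits.

From HB Require Import structures.
From mathcomp Require Import all_boot all_order all_algebra.
From mathcomp Require Import boolp classical_sets reals.
From mathcomp Require Import zify ring lra.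
Set Implicit Arguments.
Unset Strict Implicit.
Unset Printing Implicit Defensive.
Import Order.TTheory GRing.Theory Num.Theory.
Local Open Scope ring_scope.

(* On K_{a,b} the distance is 2 inside a part and 1 across, so Q = Tr + D acts
   on a vector only through its value at a vertex and its sums over the two parts.
   A vector vanishing outside one part with zero sum there is an eigenvector, for
   2a+b-4 (left part, needs a >= 2) or a+2b-4 (right part, needs b >= 2); otherwise
   the part sums are an eigenvector of the quotient matrix [[4a+b-4, b], [a, a+4b-4]].
   Hence S_Q(K_{a,b}) = (a + 3b + sqrt(9(a-b)^2 + 4ab))/2 for 2 <= a <= b and
   S_Q(K_{1,b}) = sqrt(9(b-1)^2 + 4b) for b >= 3.  For a + b = n fixed,
   9(a-b)^2 + 4ab = 9n^2 - 32ab and a + 3b = 3n - 2a both strictly decrease as a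
   grows towards n/2, and the star K_{1,n-1} is compared directly. *)

Lemma sup_max (R : realType) (E : set R) (M : R) : E M -> ubound E M -> sup E = M.
Proof.
move=> EM ub; apply/le_anti/andP; split; first by apply: ge_sup; [exists M|].
by apply: ub_le_sup => //; exists M.
Qed.

Lemma inf_min (R : realType) (E : set R) (M : R) : E M -> lbound E M -> inf E = M.
Proof.
move=> EM lb; apply/le_anti/andP; split; first by apply: ge_inf => //; exists M.
by apply: lb_le_inf; [exists M|].
Qed.

Lemma quadratic_roots (R : rcfType) (p q c d l : R) :
  (p - q) ^+ 2 + 4 * c = d -> 0 <= d ->
  (l - p) * (l - q) = c <->
  l = (p + q + Num.sqrt d) / 2 \/ l = (p + q - Num.sqrt d) / 2.
Proof.
move=> dE d0; have r2 := sqr_sqrtr d0; set r := Num.sqrt d in r2 *.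
have -> : ((l - p) * (l - q) = c) <-> ((2 * l - p - q) ^+ 2 - r ^+ 2 = 0).
  by rewrite r2 -dE; split=> h; lra.
rewrite subr_sqr; split.
  by move/eqP; rewrite mulf_eq0 => /orP[] /eqP h; [left|right]; lra.
by case=> ->; apply/eqP; rewrite mulf_eq0 ?[_ - r == 0]subr_eq0 ?addr_eq0;
  apply/orP; [left|right]; apply/eqP; field.
Qed.

Definition bip_disc (R : pzRingType) (x y : R) : R := 9 * (x - y) ^+ 2 + 4 * x * y.

Lemma bip_disc_ge0 (R : realDomainType) (x y : R) : 0 <= bip_disc x y.
Proof. have := sqr_ge0 (x - y); have := sqr_ge0 (x + y); rewrite /bip_disc; lra. Qed.

Definition bip_spread (R : rcfType) (x y : R) : R :=
  (x + 3 * y + Num.sqrt (bip_disc x y)) / 2.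

Lemma bip_spread_lt (R : rcfType) (x y m u : R) :
  x < m -> m <= u -> x + y = m + u -> bip_spread m u < bip_spread x y.
Proof.
move=> xm mu s; rewrite /bip_spread.
have disc : bip_disc m u <= bip_disc x y.
  have -> : y = m + u - x by lra.
  rewrite /bip_disc; nra.
have := ler_wsqrtr disc; lra.
Qed.

Lemma bip_spread_lt_star (R : rcfType) (m u : R) :
  2 <= m -> m <= u -> bip_spread m u < Num.sqrt (bip_disc 1 (m + u - 1)).
Proof.
move=> m2 mu; rewrite /bip_spread.
have sq_mu := sqr_sqrtr (bip_disc_ge0 m u).
have sq_star := sqr_sqrtr (bip_disc_ge0 1 (m + u - 1)).
have := sqrtr_ge0 (bip_disc m u); have := sqrtr_ge0 (bip_disc 1 (m + u - 1)).
move: sq_mu sq_star; rewrite /bip_disc => sq_mu sq_star r_star r_mu.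
have : Num.sqrt (bip_disc m u) <= 3 * (m + u) - 8 by nra.
have : 3 * (m + u) - 6 < Num.sqrt (bip_disc 1 (m + u - 1)) by nra.
lra.
Qed.

Lemma reach1 (m : nat) (e : rel 'I_m) (x y : 'I_m) : reach e 1 x y = e x y.
Proof. by apply/existsP/idP => [[z /andP[exz /eqP <-]] | exy] //; exists y; rewrite exy /=. Qed.

Section CompleteBipartite.
Variables a b : nat.
Hypotheses (a_gt0 : (0 < a)%N) (b_gt0 : (0 < b)%N).

Lemma reach2_Kbip (i j : 'I_(a + b)) : (i < a)%N = (j < a)%N -> reach (Kbip a b) 2 i j.
Proof.
move=> ij; have [z iz zj] : exists2 z, Kbip a b i z & Kbip a b z j.
  rewrite /Kbip -ij; case: (ltnP i a) => _.
    by exists (rshift a (Ordinal b_gt0)); rewrite /= ltnNge leq_addr.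
  by exists (lshift b (Ordinal a_gt0)); rewrite /= a_gt0.
by apply/existsP; exists z; rewrite iz; apply/existsP; exists j; rewrite zj eqxx.
Qed.

Lemma gdist_Kbip (i j : 'I_(a + b)) : gdist (Kbip a b) i j =
  if i == j then 0%N else if (i < a)%N == (j < a)%N then 2%N else 1%N.
Proof.
have n2 : (a + b = (a + b - 2).+2)%N by lia.
rewrite /gdist [X in iota _ X]n2 /= -/(reach (Kbip a b) 1 i j) reach1 /Kbip.
case: eqP => // /eqP ij.
case: eqP => [same | _] //=.
have -> : (a + b - 2 = (a + b - 3).+1)%N.
  have := ltn_ord i; have := ltn_ord j; move: same ij; rewrite -val_eqE.
  case: ltnP; case: ltnP => //=; lia.
by rewrite /= -/(reach (Kbip a b) 2 i j) reach2_Kbip.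
Qed.

Variable R : realType.
Local Notation Q := (distQ R (Kbip a b)).

Definition lsum (f : 'I_(a + b) -> R) : R := \sum_(i < a) f (lshift b i).
Definition rsum (f : 'I_(a + b) -> R) : R := \sum_(k < b) f (rshift a k).

Lemma lsum_delta (i : 'I_(a + b)) : lsum (fun k => (k == i)%:R) = (i < a)%N%:R.
Proof.
rewrite /lsum; case: (ltnP i a) => ia.
  rewrite (bigD1 (Ordinal ia)) //= big1 ?addr0 => [|k]; first by rewrite -val_eqE /= eqxx.
  by rewrite -!val_eqE /= => /negPf ->.
by rewrite big1 // => k _; rewrite -val_eqE /= ltn_eqF // (leq_trans (ltn_ord k) ia).
Qed.

Lemma rsum_delta (i : 'I_(a + b)) : rsum (fun k => (k == i)%:R) = (~~ (i < a)%N)%:R.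
Proof.
rewrite /rsum; case: (ltnP i a) => ia /=.
  by rewrite big1 // => k _; rewrite -val_eqE /= gtn_eqF // ltn_addr.
have ib : (i - a < b)%N by have := ltn_ord i; lia.
rewrite (bigD1 (Ordinal ib)) //= big1 ?addr0 => [|k]; first by rewrite -val_eqE /= subnKC // eqxx.
by rewrite -!val_eqE /= -(subnKC ia) eqn_add2l addKn => /negPf ->.
Qed.

Lemma lsum_single (f : 'I_(a + b) -> R) (j : 'I_(a + b)) :
  (a <= 1)%N -> (j < a)%N -> lsum f = f j.
Proof.
move=> a1 ja; rewrite /lsum (big_pred1 (Ordinal ja)) => [|k]; first by congr f; apply/val_inj.
by apply/esym/eqP/val_inj => /=; have := ltn_ord k; lia.
Qed.

Lemma rsum_single (f : 'I_(a + b) -> R) (j : 'I_(a + b)) :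
  (b <= 1)%N -> (a <= j)%N -> rsum f = f j.
Proof.
move=> b1 aj; have jb : (j - a < b)%N by have := ltn_ord j; lia.
rewrite /rsum (big_pred1 (Ordinal jb)) => [|k]; first by congr f; apply/val_inj => /=; lia.
by apply/esym/eqP/val_inj => /=; have := ltn_ord k; lia.
Qed.

Lemma sum_mul_gdist_Kbip (f : 'I_(a + b) -> R) (j : 'I_(a + b)) :
  \sum_i f i * (gdist (Kbip a b) i j)%:R =
  (if (j < a)%N then 2 * lsum f + rsum f else lsum f + 2 * rsum f) - 2 * f j.
Proof.
have dist i : f i * (gdist (Kbip a b) i j)%:R =
    f i * (if (i < a)%N == (j < a)%N then 2 else 1) - (if i == j then 2 * f i else 0).
  rewrite gdist_Kbip; case: eqP => [->|_]; first by rewrite eqxx mulr0 mulrC subrr.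
  by case: eqP; rewrite subr0.
rewrite (eq_bigr _ (fun i _ => dist i)) sumrB -big_mkcond big_pred1_eq big_split_ord /=.
congr (_ - _).
under eq_bigr => i _ do rewrite ltn_ord.
under [X in _ + X]eq_bigr => k _ do rewrite ltnNge leq_addr.
by rewrite -!big_distrl /= -/(lsum f) -/(rsum f); case: (j < a)%N; rewrite mulr1 mulrC.
Qed.

Lemma gdist_Kbip_sym (i j : 'I_(a + b)) : gdist (Kbip a b) i j = gdist (Kbip a b) j i.
Proof. by rewrite !gdist_Kbip eq_sym [(j < a)%N == _]eq_sym. Qed.

Definition eig_l : R := 2 * a%:R + b%:R - 4.
Definition eig_r : R := a%:R + 2 * b%:R - 4.
Definition quot_l : R := 4 * a%:R + b%:R - 4.
Definition quot_r : R := a%:R + 4 * b%:R - 4.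

Lemma row_mul_distQ_Kbip (v : 'rV[R]_(a + b)) (j : 'I_(a + b)) :
  (v *m Q) 0 j = if (j < a)%N then eig_l * v 0 j + 2 * lsum (v 0) + rsum (v 0)
                 else eig_r * v 0 j + lsum (v 0) + 2 * rsum (v 0).
Proof.
rewrite /distQ mulmxDr mxE /transmx mul_mx_diag !mxE /distmx.
under eq_bigr => k _ do rewrite mxE gdist_Kbip_sym -[_%:R]mul1r.
under [X in _ + X]eq_bigr => i _ do rewrite mxE.
rewrite !sum_mul_gdist_Kbip /lsum /rsum !sumr_const !card_ord /eig_l /eig_r.
by case: (j < a)%N; ring.
Qed.

Lemma eigenvector_part_sums (l : R) (v : 'rV[R]_(a + b)) : v *m Q = l *: v ->
  (l - quot_l) * lsum (v 0) = a%:R * rsum (v 0) /\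
  (l - quot_r) * rsum (v 0) = b%:R * lsum (v 0).
Proof.
move=> vQ; have eq_j j : l * v 0 j = if (j < a)%N
    then eig_l * v 0 j + 2 * lsum (v 0) + rsum (v 0)
    else eig_r * v 0 j + lsum (v 0) + 2 * rsum (v 0).
  by rewrite -row_mul_distQ_Kbip vQ mxE.
set sl := lsum (v 0) in eq_j *; set sr := rsum (v 0) in eq_j *.
have sum_l : (l - eig_l) * sl = a%:R * (2 * sl + sr).
  rewrite {1}/sl /lsum mulr_sumr (eq_bigr (fun _ => 2 * sl + sr)) => [|i _].
    by rewrite sumr_const card_ord -[_ *+ a]mulr_natl.
  by rewrite mulrBl eq_j /= ltn_ord; ring.
have sum_r : (l - eig_r) * sr = b%:R * (sl + 2 * sr).
  rewrite {1}/sr /rsum mulr_sumr (eq_bigr (fun _ => sl + 2 * sr)) => [|k _].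
    by rewrite sumr_const card_ord -[_ *+ b]mulr_natl.
  by rewrite mulrBl eq_j /= ltnNge leq_addr /=; ring.
by move: sum_l sum_r; rewrite /quot_l /quot_r /eig_l /eig_r; split; lra.
Qed.

Lemma eigenvalue_Kbip_cases (l : R) : eigenvalue Q l ->
  [\/ l = eig_l /\ (2 <= a)%N, l = eig_r /\ (2 <= b)%N
    | (l - quot_l) * (l - quot_r) = a%:R * b%:R].
Proof.
case/eigenvalueP => v vQ v_neq0.
have [sum_l sum_r] := eigenvector_part_sums vQ.
have [quad | quad_neq0] := eqVneq ((l - quot_l) * (l - quot_r) - a%:R * b%:R) 0.
  by apply: Or33; apply/eqP; rewrite -subr_eq0 quad.
have lsum0 : lsum (v 0) = 0.
  apply: (mulfI quad_neq0); rewrite mulr0 mulrBl mulrAC sum_l -mulrA [rsum _ * _]mulrC sum_r.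
  by ring.
have rsum0 : rsum (v 0) = 0.
  apply: (mulfI quad_neq0); rewrite mulr0 mulrBl -mulrA sum_r mulrCA sum_l.
  by ring.
have [j vj_neq0] : exists j, v 0 j != 0.
  apply/existsP; apply: contraNT v_neq0 => /existsPn v0.
  by apply/eqP/rowP => j; rewrite mxE; apply/eqP; rewrite -[_ == _]negbK v0.
have := row_mul_distQ_Kbip v j; rewrite vQ mxE lsum0 rsum0 !mulr0 !addr0.
case: (ltnP j a) => ja /(mulIf vj_neq0) <-.
  apply: Or31; split => //; rewrite ltnNge; apply: contra vj_neq0 => a1.
  by rewrite -(lsum_single _ a1 ja) lsum0.
apply: Or32; split => //; rewrite ltnNge; apply: contra vj_neq0 => b1.
by rewrite -(rsum_single _ b1 ja) rsum0.
Qed.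

Lemma eigenvalue_Kbip_quot (l : R) :
  (l - quot_l) * (l - quot_r) = a%:R * b%:R -> eigenvalue Q l.
Proof.
move=> quad; apply/eigenvalueP.
pose v : 'rV[R]_(a + b) := \row_j (if (j < a)%N then b%:R else l - quot_l).
have lsum_v : lsum (v 0) = a%:R * b%:R.
  rewrite /lsum (eq_bigr (fun _ => b%:R)) => [|i _]; last by rewrite mxE /= ltn_ord.
  by rewrite sumr_const card_ord mulr_natl.
have rsum_v : rsum (v 0) = b%:R * (l - quot_l).
  rewrite /rsum (eq_bigr (fun _ => l - quot_l)) => [|k _]; last by rewrite mxE /= ltnNge leq_addr.
  by rewrite sumr_const card_ord mulr_natl.
exists v; last first.
  by apply/rV0Pn; exists (lshift b (Ordinal a_gt0)); rewrite mxE /= a_gt0 pnatr_eq0 -lt0n.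
apply/rowP => j; rewrite row_mul_distQ_Kbip lsum_v rsum_v !mxE.
by move: quad; rewrite /quot_l /quot_r /eig_l /eig_r; case: (j < a)%N => quad; lra.
Qed.

Lemma eigenvalue_Kbip_part (i j : 'I_(a + b)) : i != j -> (i < a)%N = (j < a)%N ->
  eigenvalue Q (if (i < a)%N then eig_l else eig_r).
Proof.
move=> ij same; apply/eigenvalueP.
pose v : 'rV[R]_(a + b) := \row_k ((k == i)%:R - (k == j)%:R).
have lsum_v : lsum (v 0) = 0.
  rewrite (_ : lsum _ = lsum (fun k => (k == i)%:R) - lsum (fun k => (k == j)%:R)).
    by rewrite !lsum_delta same subrr.
  by rewrite /lsum -sumrB; apply: eq_bigr => k _; rewrite mxE.
have rsum_v : rsum (v 0) = 0.
  rewrite (_ : rsum _ = rsum (fun k => (k == i)%:R) - rsum (fun k => (k == j)%:R)).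
    by rewrite !rsum_delta same subrr.
  by rewrite /rsum -sumrB; apply: eq_bigr => k _; rewrite mxE.
exists v; last first.
  by apply/rV0Pn; exists i; rewrite mxE eqxx (negPf ij) subr0 oner_neq0.
apply/rowP => k; rewrite row_mul_distQ_Kbip lsum_v rsum_v !mxE !mulr0 !addr0.
have [->|ki] := eqVneq k i; first by case: ifP.
have [->|kj] := eqVneq k j; first by rewrite same; case: ifP.
by rewrite subrr !mulr0; case: ifP.
Qed.

Definition eig_plus : R := (quot_l + quot_r + Num.sqrt (bip_disc a%:R b%:R)) / 2.
Definition eig_minus : R := (quot_l + quot_r - Num.sqrt (bip_disc a%:R b%:R)) / 2.

Lemma quot_roots_Kbip (l : R) :
  (l - quot_l) * (l - quot_r) = a%:R * b%:R <-> l = eig_plus \/ l = eig_minus.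
Proof.
by apply: quadratic_roots; [rewrite /quot_l /quot_r /bip_disc; ring | exact: bip_disc_ge0].
Qed.

Lemma eigenvalue_KbipP (l : R) : eigenvalue Q l <->
  [\/ l = eig_l /\ (2 <= a)%N, l = eig_r /\ (2 <= b)%N, l = eig_plus | l = eig_minus].
Proof.
split.
  case/eigenvalue_Kbip_cases => [? | ? | /quot_roots_Kbip[] ?];
    by [apply: Or41 | apply: Or42 | apply: Or43 | apply: Or44].
case=> [[-> a2] | [-> b2] | -> | ->].
- have i0 : (0 < a + b)%N by lia.
  have i1 : (1 < a + b)%N by lia.
  by have := @eigenvalue_Kbip_part (Ordinal i0) (Ordinal i1) isT; rewrite /= a_gt0 a2; apply.
- have ia : (a < a + b)%N by lia.
  have ia1 : (a.+1 < a + b)%N by lia.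
  have a1 : (a.+1 < a)%N = false by lia.
  have := @eigenvalue_Kbip_part (Ordinal ia) (Ordinal ia1); rewrite /= ltnn a1.
  by apply=> //; rewrite neq_ltn ltnSn.
- by apply: eigenvalue_Kbip_quot; apply/quot_roots_Kbip; left.
- by apply: eigenvalue_Kbip_quot; apply/quot_roots_Kbip; right.
Qed.

Lemma sup_eigset_Kbip : sup (eigset Q) = eig_plus.
Proof.
apply: sup_max => [|x /eigenvalue_KbipP]; first by apply/eigenvalue_KbipP; apply: Or43.
have r0 := sqrtr_ge0 (bip_disc (a%:R : R) b%:R).
have a0 : 0 <= a%:R :> R := ler0n _ _; have b0 : 0 <= b%:R :> R := ler0n _ _.
by rewrite /eig_plus /eig_minus /eig_l /eig_r /quot_l /quot_r; case=> [[-> _]|[-> _]|->|->]; lra.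
Qed.

Lemma SQ_Kbip : (2 <= a)%N -> (a <= b)%N -> SQ R (Kbip a b) = bip_spread a%:R b%:R.
Proof.
move=> a2 ab; have a2R : 2 <= a%:R :> R by rewrite (ler_nat R 2).
have abR : a%:R <= b%:R :> R by rewrite ler_nat.
have disc0 := bip_disc_ge0 (a%:R : R) b%:R; have r2 := sqr_sqrtr disc0.
have r0 := sqrtr_ge0 (bip_disc (a%:R : R) b%:R).
have r_le : Num.sqrt (bip_disc (a%:R : R) b%:R) <= a%:R + 3 * b%:R.
  have : 0 <= a%:R * (5 * b%:R - 2 * a%:R) :> R by apply: mulr_ge0; lra.
  by move: r2; rewrite /bip_disc; nra.
rewrite /SQ /spread sup_eigset_Kbip (@inf_min _ _ eig_l).
- by rewrite /eig_plus /eig_l /quot_l /quot_r /bip_spread; lra.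
- by apply/eigenvalue_KbipP; apply: Or41.
move=> x /eigenvalue_KbipP.
by rewrite /eig_plus /eig_minus /eig_l /eig_r /quot_l /quot_r; case=> [[-> _]|[-> _]|->|->]; lra.
Qed.

Lemma SQ_Kbip_star : a = 1%N -> (3 <= b)%N -> SQ R (Kbip a b) = Num.sqrt (bip_disc a%:R b%:R).
Proof.
move=> a1 b3; have aR : a%:R = 1 :> R by rewrite a1.
have b3R : 3 <= b%:R :> R by rewrite (ler_nat R 3).
have disc0 := bip_disc_ge0 (a%:R : R) b%:R; have r2 := sqr_sqrtr disc0.
have r0 := sqrtr_ge0 (bip_disc (a%:R : R) b%:R).
have r_ge : 3 * a%:R + b%:R <= Num.sqrt (bip_disc (a%:R : R) b%:R).
  have : 0 <= b%:R * (2 * b%:R - 5) :> R by apply: mulr_ge0; lra.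
  by move: r2 r0; rewrite /bip_disc aR; nra.
rewrite /SQ /spread sup_eigset_Kbip (@inf_min _ _ eig_minus).
- by rewrite /eig_plus /eig_minus; lra.
- by apply/eigenvalue_KbipP; apply: Or44.
move=> x /eigenvalue_KbipP.
rewrite /eig_plus /eig_minus /eig_r /quot_l /quot_r.
by case=> [[_ a2]|[-> _]|->|->]; [rewrite a1 in a2 | lra..].
Qed.
End CompleteBipartite.

Lemma SQ_Kbip_lt_balanced (R : realType) (a m u : nat) :
  (0 < a)%N -> (a < m)%N -> (m <= u)%N -> SQ R (Kbip m u) < SQ R (Kbip a (m + u - a)).
Proof.
move=> a_gt0 am mu; have m2 : (2 <= m)%N by lia.
have m_gt0 : (0 < m)%N by lia.
have u_gt0 : (0 < u)%N by lia.
have b_gt0 : (0 < m + u - a)%N by lia.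
have bE : (m + u - a)%:R = m%:R + u%:R - a%:R :> R by rewrite natrB ?natrD //; lia.
rewrite (@SQ_Kbip m u m_gt0 u_gt0 R m2 mu).
have [a2 | a1] := ltnP 1 a.
  rewrite (@SQ_Kbip a _ a_gt0 b_gt0 R a2) ?bE; last by lia.
  by apply: bip_spread_lt; [rewrite ltr_nat | rewrite ler_nat | ring].
have a1' : a = 1%N by lia.
rewrite (@SQ_Kbip_star a _ a_gt0 b_gt0 R a1') ?bE; last by lia.
rewrite a1'; apply: bip_spread_lt_star; [by rewrite (ler_nat R 2) | by rewrite ler_nat].
Qed.

Theorem corollary4p4 (R : realType) (n a : nat) :
  (0 < a)%N -> (0 < n)%N -> (2 * a <= n)%N ->
  SQ R (Kbip (n./2) (uphalf n)) <= SQ R (Kbip a (n - a)) /\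
  (SQ R (Kbip a (n - a)) = SQ R (Kbip (n./2) (uphalf n)) <-> a = n./2).
Proof.
move=> a_gt0 n_gt0 an.
have n_halves : (n./2 + uphalf n = n)%N.
  by have := odd_double_half n; rewrite uphalf_half -muln2; lia.
have [am | ma] := ltnP a n./2; last first.
  have -> : a = n./2 by have := odd_double_half n; rewrite -muln2; lia.
  by have -> : (n - n./2 = uphalf n)%N by lia.
have lt : SQ R (Kbip (n./2) (uphalf n)) < SQ R (Kbip a (n - a)).
  rewrite -[in (n - a)%N]n_halves; apply: SQ_Kbip_lt_balanced => //.
  by rewrite uphalf_half; lia.
split; first exact: ltW.
by split=> [eq | eq]; [move: lt; rewrite eq ltxx | lia].
Qed.
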